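(* Let $\Omega\subseteq\mathbb{R}^2$ be a compact domain, $r_d>0$, $a_I>0$, $a_h>0$, $a_v>0$, and let $c_r>0$ be a collision radius. Consider $N$ vehicles with dynamics $\dot p_i=v_i$, $\dot v_i=u_i$ and control law (applied without thresholding) $$u_i=-\sum_{j\neq i}\nabla_i V_I(p_{ij})-\nabla_i V_h(p_i)-a_v v_i.$$ Let $$\Phi=\frac12\sum_{i=1}^N\Bigl(\dot p_i\cdot\dot p_i+\sum_{j\ne i}V_I(p_{ij})+2V_h(p_i)\Bigr).$$ If the initial configuration satisfies $$\Phi(0)<\int_{r_d}^{c_r}f_I(s)\,ds=\frac{a_I}{2}(c_r-r_d)^2,$$ then no vehicle collision occurs for any $t\ge0$, i.e., $\|p_i(t)-p_j(t)\|>c_r$ for all $i\neq j$ and all $t\ge 0$.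
   Context: $p_{ij}:=p_i-p_j$; $P_{\partial\Omega}(x)$ is the closest point of $\partial\Omega$ to $x$ and the signed distance of $x$ from $\partial\Omega$ is positive outside $\Omega$, negative inside. $f_I(r)=a_I(r-r_d)$ for $0\le r<r_d$ and $f_I(r)=0$ for $r\ge r_d$. $V_I(x)=\frac{a_I}{2}(\|x\|-r_d)^2$ for $\|x\|<r_d$, $V_I(x)=0$ otherwise; $V_h(x)=0$ if the signed distance of $x$ to $\partial\Omega$ is $\le -\frac{r_d}{2}$ and $V_h(x)=\frac{a_h}{2}(\text{signed distance}+\frac{r_d}{2})^2$ otherwise. A collision between vehicles $i$ and $j$ means $\|p_i-p_j\|\le c_r$. *)

From Stdlib Require Import Reals Lra List ClassicalDescription.
From Coquelicot Require Import Coquelicot.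
Open Scope R_scope.

Definition pt := (R * R)%type.
Definition vadd (x y : pt) : pt := (fst x + fst y, snd x + snd y).
Definition vopp (x : pt) : pt := (- fst x, - snd x).
Definition vsub (x y : pt) : pt := vadd x (vopp y).
Definition vscal (a : R) (x : pt) : pt := (a * fst x, a * snd x).
Definition vzero : pt := (0, 0).
Definition dot (x y : pt) : R := fst x * fst y + snd x * snd y.
Definition norm2 (x : pt) : R := sqrt (dot x x).

Definition in_ball (c : pt) (e : R) (x : pt) : Prop := norm2 (vsub x c) < e.
Definition open_set (U : pt -> Prop) : Prop :=
  forall x, U x -> exists e, 0 < e /\ forall y, in_ball x e y -> U y.
Definition closed_set (S : pt -> Prop) : Prop := open_set (fun x => ~ S x).
Definition bounded_set (S : pt -> Prop) : Prop :=
  exists M, forall x, S x -> norm2 x <= M.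
Definition interior (S : pt -> Prop) (x : pt) : Prop :=
  exists e, 0 < e /\ forall y, in_ball x e y -> S y.
Definition boundary (S : pt -> Prop) (x : pt) : Prop :=
  forall e, 0 < e ->
    (exists y, in_ball x e y /\ S y) /\ (exists y, in_ball x e y /\ ~ S y).
Definition connected_open (U : pt -> Prop) : Prop :=
  forall A B : pt -> Prop, open_set A -> open_set B ->
    (forall x, U x <-> A x \/ B x) -> (forall x, ~ (A x /\ B x)) ->
    (forall x, ~ A x) \/ (forall x, ~ B x).

Definition compact_domain (Om : pt -> Prop) : Prop :=
  closed_set Om /\ bounded_set Om /\
  (exists x, interior Om x) /\ connected_open (interior Om) /\
  (forall x, Om x -> forall e, 0 < e -> exists y, in_ball x e y /\ interior Om y).

Definition dist_set (S : pt -> Prop) (x : pt) : R :=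
  real (Glb_Rbar (fun r => exists y, S y /\ r = norm2 (vsub x y))).
Definition signed_dist (Om : pt -> Prop) (x : pt) : R :=
  if excluded_middle_informative (Om x)
  then - dist_set (boundary Om) x
  else dist_set (boundary Om) x.

Definition f_I (a_I r_d r : R) : R := if Rlt_dec r r_d then a_I * (r - r_d) else 0.
Definition V_I (a_I r_d : R) (x : pt) : R :=
  if Rlt_dec (norm2 x) r_d then a_I / 2 * (norm2 x - r_d) ^ 2 else 0.
Definition V_h (Om : pt -> Prop) (a_h r_d : R) (x : pt) : R :=
  if Rle_dec (signed_dist Om x) (- (r_d / 2)) then 0
  else a_h / 2 * (signed_dist Om x + r_d / 2) ^ 2.

Definition is_grad (V : pt -> R) (x g : pt) : Prop :=
  forall eps, 0 < eps -> exists delta, 0 < delta /\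
    forall h, norm2 h < delta ->
      Rabs (V (vadd x h) - V x - dot g h) <= eps * norm2 h.

Definition curve_deriv (c : R -> pt) (t : R) (d : pt) : Prop :=
  derivable_pt_lim (fun s => fst (c s)) t (fst d) /\
  derivable_pt_lim (fun s => snd (c s)) t (snd d).

Definition cont_nonneg (c : R -> pt) : Prop :=
  forall t, 0 <= t -> forall eps, 0 < eps -> exists delta, 0 < delta /\
    forall s, 0 <= s -> Rabs (s - t) < delta -> norm2 (vsub (c s) (c t)) < eps.

Definition sumR_ne (N i : nat) (F : nat -> R) : R :=
  fold_right (fun j acc => (if Nat.eq_dec j i then 0 else F j) + acc) 0 (seq 0 N).
Definition sumR (N : nat) (F : nat -> R) : R :=
  fold_right (fun j acc => F j + acc) 0 (seq 0 N).
Definition sumV_ne (N i : nat) (F : nat -> pt) : pt :=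
  fold_right (fun j acc => vadd (if Nat.eq_dec j i then vzero else F j) acc) vzero (seq 0 N).

(** The energy Phi(t) (with dp_i/dt = v_i) *)
Definition Phi (Om : pt -> Prop) (a_I a_h r_d : R) (N : nat)
    (p v : nat -> R -> pt) (t : R) : R :=
  / 2 * sumR N (fun i =>
     dot (v i t) (v i t)
     + sumR_ne N i (fun j => V_I a_I r_d (vsub (p i t) (p j t)))
     + 2 * V_h Om a_h r_d (p i t)).

From Stdlib Require Import Reals List Lra Lia Classical IndefiniteDescription
  ClassicalDescription.
From Coquelicot Require Import Coquelicot.
Open Scope R_scope.

(* [Phi] is the total energy of the fleet.  Along the closed-loop dynamics its
   derivative is [- a_v * sum_i |v_i|^2 <= 0]: the gradient terms of the control law
   cancel the time derivatives of the potentials, the pairwise gradients being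
   antisymmetric in [(i, j)] because [V_I] is even.  By the mean value theorem and
   right continuity at [0], [Phi t <= Phi 0].  All terms of [Phi] are nonnegative, so
   [V_I (p_ij t) <= Phi t]; but a collision [|p_ij| <= c_r <= r_d] would force
   [V_I (p_ij t) >= a_I / 2 * (c_r - r_d)^2 > Phi 0]. *)

(** * The Euclidean plane *)

Lemma dot_comm x y : dot x y = dot y x.
Proof. destruct x, y; unfold dot; simpl; ring. Qed.

Lemma dot_ge0 x : 0 <= dot x x.
Proof. destruct x; unfold dot; simpl; nra. Qed.

Lemma norm2_ge0 x : 0 <= norm2 x.
Proof. apply sqrt_pos. Qed.

Lemma norm2_sq x : norm2 x * norm2 x = dot x x.
Proof. apply sqrt_sqrt, dot_ge0. Qed.

Lemma norm2_eq0 x : norm2 x = 0 -> x = vzero.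
Proof.
  intro H; pose proof (norm2_sq x) as Hsq; rewrite H in Hsq.
  destruct x as [a b]; unfold dot, vzero in *; simpl in *; f_equal; nra.
Qed.

Lemma norm2_le_Rabs_sum x : norm2 x <= Rabs (fst x) + Rabs (snd x).
Proof.
  destruct x as [a b]; unfold norm2, dot; simpl.
  pose proof (Rabs_pos a); pose proof (Rabs_pos b).
  rewrite <- (sqrt_square (Rabs a + Rabs b)) by lra.
  apply sqrt_le_1_alt.
  assert (Rabs a * Rabs a = a * a) by (rewrite <- Rabs_mult; apply Rabs_right; nra).
  assert (Rabs b * Rabs b = b * b) by (rewrite <- Rabs_mult; apply Rabs_right; nra).
  nra.
Qed.

Lemma norm2_vscal s x : 0 <= s -> norm2 (vscal s x) = s * norm2 x.
Proof.
  intro Hs; unfold norm2.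
  replace (dot (vscal s x) (vscal s x)) with (s * s * dot x x)
    by (destruct x; unfold dot, vscal; simpl; ring).
  rewrite sqrt_mult_alt, sqrt_square by nra; reflexivity.
Qed.

Lemma norm2_triangle x y : norm2 (vadd x y) <= norm2 x + norm2 y.
Proof.
  destruct x as [a b], y as [c d]; unfold norm2, dot, vadd; simpl.
  pose proof (sqrt_cauchy a b c d) as Hcs; unfold Rsqr in Hcs.
  pose proof (sqrt_sqrt (a * a + b * b) ltac:(nra)).
  pose proof (sqrt_sqrt (c * c + d * d) ltac:(nra)).
  pose proof (sqrt_pos (a * a + b * b)); pose proof (sqrt_pos (c * c + d * d)).
  rewrite <- (sqrt_square (sqrt (a * a + b * b) + sqrt (c * c + d * d))) by lra.
  apply sqrt_le_1_alt; nra.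
Qed.

Lemma norm2_vopp x : norm2 (vopp x) = norm2 x.
Proof. unfold norm2; f_equal; destruct x; unfold dot, vopp; simpl; ring. Qed.

Lemma norm2_vsubC x y : norm2 (vsub x y) = norm2 (vsub y x).
Proof. unfold norm2; f_equal; destruct x, y; unfold dot, vsub, vadd, vopp; simpl; ring. Qed.

Lemma norm2_vsub_triangle x y z : norm2 (vsub x z) <= norm2 (vsub x y) + norm2 (vsub y z).
Proof.
  replace (vsub x z) with (vadd (vsub x y) (vsub y z)) by
    (destruct x, y, z; unfold vsub, vadd, vopp; simpl; f_equal; ring).
  apply norm2_triangle.
Qed.

Lemma norm2_vsubxx x : norm2 (vsub x x) = 0.
Proof.
  unfold norm2, dot, vsub, vadd, vopp; simpl.
  replace (_ + _) with 0 by ring; apply sqrt_0.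
Qed.

Lemma vsubK x y : vadd x (vsub y x) = y.
Proof. destruct x, y; unfold vsub, vadd, vopp; simpl; f_equal; ring. Qed.

Lemma norm2_lipschitz x y : Rabs (norm2 y - norm2 x) <= norm2 (vsub y x).
Proof.
  pose proof (norm2_triangle x (vsub y x)); pose proof (norm2_triangle y (vsub x y)).
  rewrite vsubK in *; rewrite (norm2_vsubC x y) in *.
  apply Rabs_le; lra.
Qed.

(** * Continuity of the potentials *)

Definition cont_at (F : pt -> R) (x : pt) : Prop :=
  forall eps, 0 < eps -> exists delta, 0 < delta /\
    forall y, norm2 (vsub y x) < delta -> Rabs (F y - F x) < eps.

Lemma cont_at_of_lipschitz F x :
  (forall y, Rabs (F y - F x) <= norm2 (vsub y x)) -> cont_at F x.
Proof.
  intros HF eps Heps; exists eps; split; [exact Heps|].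
  intros y Hy; specialize (HF y); lra.
Qed.

Lemma cont_at_comp (h : R -> R) F x :
  continuity_pt h (F x) -> cont_at F x -> cont_at (fun y => h (F y)) x.
Proof.
  intros Hh HF eps Heps.
  destruct (Hh eps Heps) as [a [Ha Pa]].
  destruct (HF a Ha) as [d [Hd Pd]].
  exists d; split; [exact Hd|]; intros y Hy.
  destruct (Req_dec (F y) (F x)) as [E|NE].
  - rewrite E, Rminus_eq_0, Rabs_R0; exact Heps.
  - apply (Pa (F y)); split; [split; [exact I | congruence] | exact (Pd y Hy)].
Qed.

Lemma cont_at_norm2 x : cont_at norm2 x.
Proof. apply cont_at_of_lipschitz; intro y; apply norm2_lipschitz. Qed.

Lemma cont_at_dot_self x : cont_at (fun y => dot y y) x.
Proof.
  intros eps Heps.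
  destruct (cont_at_comp (fun r => r * r) norm2 x ltac:(reg) (cont_at_norm2 x) eps Heps)
    as [d [Hd P]].
  exists d; split; [exact Hd|]; intros y Hy.
  rewrite <- !norm2_sq; exact (P y Hy).
Qed.

(* The infimum of the empty set is [+oo], whose [real] part is [0]. *)
Lemma dist_set_empty S x : (forall y, ~ S y) -> dist_set S x = 0.
Proof.
  intro HS; unfold dist_set.
  destruct (Glb_Rbar_correct (fun r => exists y, S y /\ r = norm2 (vsub x y))) as [_ Hglb].
  assert (H : Rbar_le p_infty (Glb_Rbar (fun r => exists y, S y /\ r = norm2 (vsub x y)))).
  { apply Hglb; intros r [y [Hy _]]; destruct (HS y Hy). }
  destruct (Glb_Rbar _); simpl in H; [contradiction | reflexivity | contradiction].
Qed.

Lemma dist_set_glb S x z : S z ->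
  Glb_Rbar (fun r => exists y, S y /\ r = norm2 (vsub x y)) = Finite (dist_set S x).
Proof.
  intro Hz; unfold dist_set.
  destruct (Glb_Rbar_correct (fun r => exists y, S y /\ r = norm2 (vsub x y))) as [Hlb Hglb].
  assert (Hup := Hlb _ (ex_intro _ z (conj Hz eq_refl))).
  assert (Hlow : Rbar_le 0 (Glb_Rbar (fun r => exists y, S y /\ r = norm2 (vsub x y)))).
  { apply Hglb; intros r [y [_ ->]]; apply norm2_ge0. }
  destruct (Glb_Rbar _); simpl in *; [reflexivity | contradiction | contradiction].
Qed.

Lemma dist_set_le S x z : S z -> dist_set S x <= norm2 (vsub x z).
Proof.
  intro Hz.
  destruct (Glb_Rbar_correct (fun r => exists y, S y /\ r = norm2 (vsub x y))) as [Hlb _].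
  specialize (Hlb _ (ex_intro _ z (conj Hz eq_refl))).
  rewrite (dist_set_glb S x z Hz) in Hlb; exact Hlb.
Qed.

Lemma dist_set_ge0 S x : 0 <= dist_set S x.
Proof.
  destruct (classic (exists z, S z)) as [[z Hz]|HS].
  - destruct (Glb_Rbar_correct (fun r => exists y, S y /\ r = norm2 (vsub x y))) as [_ Hglb].
    assert (H : Rbar_le 0 (Glb_Rbar (fun r => exists y, S y /\ r = norm2 (vsub x y)))).
    { apply Hglb; intros r [y [_ ->]]; apply norm2_ge0. }
    rewrite (dist_set_glb S x z Hz) in H; exact H.
  - rewrite dist_set_empty by (intros y Hy; eauto); lra.
Qed.

Lemma dist_set_triangle S x y : dist_set S x <= dist_set S y + norm2 (vsub x y).
Proof.
  destruct (classic (exists z, S z)) as [[z Hz]|HS].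
  - destruct (Glb_Rbar_correct (fun r => exists w, S w /\ r = norm2 (vsub y w))) as [_ Hglb].
    assert (H : Rbar_le (dist_set S x - norm2 (vsub x y))
                  (Glb_Rbar (fun r => exists w, S w /\ r = norm2 (vsub y w)))).
    { apply Hglb; intros r [w [Hw ->]]; simpl.
      pose proof (dist_set_le S x w Hw); pose proof (norm2_vsub_triangle x y w); lra. }
    rewrite (dist_set_glb S y z Hz) in H; simpl in H; lra.
  - rewrite !dist_set_empty by (intros w Hw; eauto); pose proof (norm2_ge0 (vsub x y)); lra.
Qed.

Lemma dist_set_lipschitz S x y : Rabs (dist_set S y - dist_set S x) <= norm2 (vsub y x).
Proof.
  pose proof (dist_set_triangle S x y); pose proof (dist_set_triangle S y x).
  rewrite (norm2_vsubC x y) in *; apply Rabs_le; lra.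
Qed.

Lemma Rabs_signed_dist Om x : Rabs (signed_dist Om x) = dist_set (boundary Om) x.
Proof.
  pose proof (dist_set_ge0 (boundary Om) x); unfold signed_dist.
  destruct excluded_middle_informative; [rewrite Rabs_Ropp|]; apply Rabs_right; lra.
Qed.

Lemma signed_dist_lipschitz_same_side Om x y : (Om y <-> Om x) ->
  Rabs (signed_dist Om y - signed_dist Om x) <= norm2 (vsub y x).
Proof.
  intro Hside; pose proof (dist_set_lipschitz (boundary Om) x y); unfold signed_dist.
  destruct (excluded_middle_informative (Om x)), (excluded_middle_informative (Om y));
    [| tauto | tauto | exact H].
  replace (- _ - - _) with (- (dist_set (boundary Om) y - dist_set (boundary Om) x))
    by ring.
  rewrite Rabs_Ropp; exact H.
Qed.

Lemma cont_at_signed_dist Om x : cont_at (signed_dist Om) x.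
Proof.
  destruct (classic (boundary Om x)) as [Hb|Hnb].
  - apply cont_at_of_lipschitz; intro y.
    assert (Hx : dist_set (boundary Om) x = 0).
    { pose proof (dist_set_le _ x x Hb); pose proof (dist_set_ge0 (boundary Om) x).
      rewrite norm2_vsubxx in *; lra. }
    pose proof (Rabs_triang (signed_dist Om y) (- signed_dist Om x)).
    rewrite Rabs_Ropp, !Rabs_signed_dist, Hx in H.
    pose proof (dist_set_le _ y x Hb); unfold Rminus; lra.
  - apply not_all_ex_not in Hnb as [e He]; apply imply_to_and in He as [He Hmixed].
    assert (Hside : forall y, in_ball x e y -> (Om y <-> Om x)).
    { assert (Hx : in_ball x e x) by (unfold in_ball; rewrite norm2_vsubxx; exact He).
      intros y Hy; split; intro H; apply NNPP; intro H'; apply Hmixed;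
        split; eauto. }
    intros eps Heps; exists (Rmin e eps); split; [apply Rmin_pos; lra|].
    intros y Hy; pose proof (Rmin_l e eps); pose proof (Rmin_r e eps).
    pose proof (signed_dist_lipschitz_same_side Om x y (Hside y ltac:(unfold in_ball; lra))).
    lra.
Qed.

Lemma continuity_glue (f g h : R -> R) c :
  (forall y, y <= c -> f y = g y) -> (forall y, c <= y -> f y = h y) ->
  continuity g -> continuity h -> continuity f.
Proof.
  intros Hg Hh Cg Ch x eps Heps.
  destruct (Cg x eps Heps) as [dg [Hdg Pg]]; destruct (Ch x eps Heps) as [dh [Hdh Ph]].
  simpl in *; unfold R_dist in *.
  destruct (Rtotal_order x c) as [Hx|[Hx|Hx]].
  - exists (Rmin dg (c - x)); split; [apply Rmin_pos; lra|].
    intros y [Dy Hy]; pose proof (Rmin_l dg (c - x)); pose proof (Rmin_r dg (c - x)).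
    apply Rabs_def2 in Hy as Hy'.
    rewrite !Hg by lra; apply Pg; split; [exact Dy | lra].
  - exists (Rmin dg dh); split; [apply Rmin_pos; lra|].
    intros y [Dy Hy]; pose proof (Rmin_l dg dh); pose proof (Rmin_r dg dh).
    destruct (Rle_dec y c).
    + rewrite !Hg by lra; apply Pg; split; [exact Dy | lra].
    + rewrite !Hh by lra; apply Ph; split; [exact Dy | lra].
  - exists (Rmin dh (x - c)); split; [apply Rmin_pos; lra|].
    intros y [Dy Hy]; pose proof (Rmin_l dh (x - c)); pose proof (Rmin_r dh (x - c)).
    apply Rabs_def2 in Hy as Hy'.
    rewrite !Hh by lra; apply Ph; split; [exact Dy | lra].
Qed.

Lemma cont_at_V_I a_I r_d x : cont_at (V_I a_I r_d) x.
Proof.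
  apply (cont_at_comp (fun r => if Rlt_dec r r_d then a_I / 2 * (r - r_d) ^ 2 else 0)
           norm2); [| apply cont_at_norm2].
  apply (continuity_glue _ (fun r => a_I / 2 * (r - r_d) ^ 2) (fun _ => 0) r_d);
    [| | reg | reg]; intros y Hy; destruct Rlt_dec; try lra.
  replace y with r_d by lra; ring.
Qed.

Lemma cont_at_V_h Om a_h r_d x : cont_at (V_h Om a_h r_d) x.
Proof.
  apply (cont_at_comp
           (fun r => if Rle_dec r (- (r_d / 2)) then 0 else a_h / 2 * (r + r_d / 2) ^ 2)
           (signed_dist Om)); [| apply cont_at_signed_dist].
  apply (continuity_glue _ (fun _ => 0) (fun r => a_h / 2 * (r + r_d / 2) ^ 2)
           (- (r_d / 2))); [| | reg | reg]; intros y Hy; destruct Rle_dec; try lra.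
  replace y with (- (r_d / 2)) by lra; ring.
Qed.

Lemma cont_nonneg_vsub c1 c2 :
  cont_nonneg c1 -> cont_nonneg c2 -> cont_nonneg (fun s => vsub (c1 s) (c2 s)).
Proof.
  intros H1 H2 t Ht eps Heps.
  destruct (H1 t Ht (eps / 2) ltac:(lra)) as [d1 [Hd1 P1]].
  destruct (H2 t Ht (eps / 2) ltac:(lra)) as [d2 [Hd2 P2]].
  exists (Rmin d1 d2); split; [apply Rmin_pos; lra|].
  intros s Hs Hst; pose proof (Rmin_l d1 d2); pose proof (Rmin_r d1 d2).
  specialize (P1 s Hs ltac:(lra)); specialize (P2 s Hs ltac:(lra)).
  pose proof (norm2_triangle (vsub (c1 s) (c1 t)) (vopp (vsub (c2 s) (c2 t)))).
  rewrite norm2_vopp in H3.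
  replace (vadd (vsub (c1 s) (c1 t)) (vopp (vsub (c2 s) (c2 t))))
    with (vsub (vsub (c1 s) (c2 s)) (vsub (c1 t) (c2 t))) in H3
    by (destruct (c1 s), (c1 t), (c2 s), (c2 t); unfold vsub, vadd, vopp; simpl;
        f_equal; ring).
  lra.
Qed.

(* [Rmax 0] freezes the curve at its initial point for [s < 0], so that
   [continuity_pt] at [0] expresses continuity from the right. *)
Lemma continuity_pt_right_0 c F :
  cont_nonneg c -> cont_at F (c 0) -> continuity_pt (fun s => F (c (Rmax 0 s))) 0.
Proof.
  intros Hc HF eps Heps.
  destruct (HF eps Heps) as [d1 [Hd1 P1]].
  destruct (Hc 0 (Rle_refl 0) d1 Hd1) as [d2 [Hd2 P2]].
  exists d2; split; [exact Hd2|]; intros s [_ Hs]; simpl in *; unfold R_dist in *.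
  rewrite (Rmax_left 0 0) by lra.
  apply P1, P2; [apply Rmax_l|].
  unfold Rmax; destruct (Rle_dec 0 s); rewrite Rminus_0_r in *; [exact Hs|].
  rewrite Rabs_R0; exact Hd2.
Qed.

(** * Finite sums *)

(* [sumR N F] and [sumR_ne N i F] are, by conversion, sums [sumL (seq 0 N) _]. *)
Definition sumL (l : list nat) (F : nat -> R) : R := fold_right (fun j acc => F j + acc) 0 l.

Lemma sumL_ext l F G : (forall j, In j l -> F j = G j) -> sumL l F = sumL l G.
Proof. induction l as [|a l IH]; simpl; intros H; [reflexivity|]; rewrite H, IH; auto. Qed.

Lemma sumL_plus l F G : sumL l (fun j => F j + G j) = sumL l F + sumL l G.
Proof. induction l as [|a l IH]; simpl; [ring|]; rewrite IH; ring. Qed.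

Lemma sumL_scal l c F : sumL l (fun j => c * F j) = c * sumL l F.
Proof. induction l as [|a l IH]; simpl; [ring|]; rewrite IH; ring. Qed.

Lemma sumL_minus l F G : sumL l (fun j => F j - G j) = sumL l F - sumL l G.
Proof. induction l as [|a l IH]; simpl; [ring|]; rewrite IH; ring. Qed.

Lemma sumL_zero l : sumL l (fun _ => 0) = 0.
Proof. induction l as [|a l IH]; simpl; [ring|]; rewrite IH; ring. Qed.

Lemma sumL_swap l1 l2 F :
  sumL l1 (fun i => sumL l2 (F i)) = sumL l2 (fun j => sumL l1 (fun i => F i j)).
Proof.
  induction l1 as [|a l IH]; simpl; [symmetry; apply sumL_zero|].
  rewrite IH, <- sumL_plus; reflexivity.
Qed.

Lemma sumL_antisym l A : (forall i j, In i l -> In j l -> A j i = - A i j) ->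
  sumL l (fun i => sumL l (A i)) = 0.
Proof.
  intro HA.
  assert (H : sumL l (fun i => sumL l (A i)) = -1 * sumL l (fun i => sumL l (A i))).
  { rewrite sumL_swap at 1; rewrite <- sumL_scal; apply sumL_ext; intros j Hj.
    rewrite <- sumL_scal; apply sumL_ext; intros i Hi; rewrite (HA j i Hj Hi); ring. }
  lra.
Qed.

Lemma sumL_ge0 l F : (forall j, In j l -> 0 <= F j) -> 0 <= sumL l F.
Proof.
  induction l as [|a l IH]; simpl; intros H; [lra|].
  pose proof (H a (or_introl eq_refl)); pose proof (IH (fun j Hj => H j (or_intror Hj))); lra.
Qed.

Lemma sumL_ge_term l F i : (forall j, In j l -> 0 <= F j) -> In i l -> F i <= sumL l F.
Proof.
  induction l as [|a l IH]; simpl; intros H Hi; [contradiction|].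
  pose proof (H a (or_introl eq_refl)).
  pose proof (sumL_ge0 l F (fun j Hj => H j (or_intror Hj))).
  destruct Hi as [<-|Hi]; [lra|].
  pose proof (IH (fun j Hj => H j (or_intror Hj)) Hi); lra.
Qed.

Lemma sumL_ge_two_terms l F i j : NoDup l -> (forall k, In k l -> 0 <= F k) ->
  In i l -> In j l -> i <> j -> F i + F j <= sumL l F.
Proof.
  induction l as [|a l IH]; simpl; intros Hnd H Hi Hj Hij; [contradiction|].
  inversion Hnd as [|? ? Ha Hl]; subst.
  assert (H' : forall k, In k l -> 0 <= F k) by auto.
  pose proof (H a (or_introl eq_refl)).
  destruct Hi as [<-|Hi], Hj as [<-|Hj].
  - congruence.
  - pose proof (sumL_ge_term l F j H' Hj); lra.
  - pose proof (sumL_ge_term l F i H' Hi); lra.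
  - pose proof (IH Hl H' Hi Hj Hij); lra.
Qed.

Lemma derivable_pt_lim_sumL l (F : nat -> R -> R) (D : nat -> R) t :
  (forall j, In j l -> derivable_pt_lim (F j) t (D j)) ->
  derivable_pt_lim (fun s => sumL l (fun j => F j s)) t (sumL l D).
Proof.
  induction l as [|a l IH]; simpl; intros H; [apply derivable_pt_lim_const|].
  apply (derivable_pt_lim_plus (F a) (fun s => sumL l (fun j => F j s))); auto.
Qed.

Lemma continuity_pt_sumL l (F : nat -> R -> R) x :
  (forall j, In j l -> continuity_pt (F j) x) ->
  continuity_pt (fun s => sumL l (fun j => F j s)) x.
Proof.
  induction l as [|a l IH]; simpl; intros H; [apply continuity_pt_const; intros ? ?; reflexivity|].
  apply (continuity_pt_plus (F a) (fun s => sumL l (fun j => F j s))); auto.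
Qed.

Lemma dot_sumV_ne N i a G :
  dot a (sumV_ne N i G) = sumR_ne N i (fun j => dot a (G j)).
Proof.
  unfold sumV_ne, sumR_ne; induction (seq 0 N) as [|j l IH]; simpl.
  - unfold dot, vzero; simpl; ring.
  - rewrite <- IH.
    generalize (fold_right (fun j acc => vadd (if Nat.eq_dec j i then vzero else G j) acc)
                  vzero l); intros [s1 s2].
    destruct Nat.eq_dec; destruct a; [|destruct (G j)]; unfold dot, vadd, vzero; simpl; ring.
Qed.

(** * Gradients and the chain rule *)

Lemma is_grad_unique V x g1 g2 : is_grad V x g1 -> is_grad V x g2 -> g1 = g2.
Proof.
  intros H1 H2; set (w := vsub g1 g2).
  assert (Hsmall : forall eps, 0 < eps -> 0 < norm2 w -> norm2 w <= 2 * eps).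
  { intros eps Heps Hw.
    destruct (H1 eps Heps) as [d1 [Hd1 P1]]; destruct (H2 eps Heps) as [d2 [Hd2 P2]].
    set (s := Rmin d1 d2 / (2 * norm2 w)).
    assert (Hs : 0 < s) by (apply Rdiv_lt_0_compat; [apply Rmin_pos|]; lra).
    set (h := vscal s w).
    assert (Hhs : norm2 h = s * norm2 w) by (unfold h; apply norm2_vscal; lra).
    assert (Hh : norm2 h = Rmin d1 d2 / 2) by (rewrite Hhs; unfold s; field; lra).
    pose proof (Rmin_l d1 d2); pose proof (Rmin_r d1 d2).
    specialize (P1 h ltac:(lra)); specialize (P2 h ltac:(lra)).
    assert (Hwh : dot w h = s * (norm2 w * norm2 w)).
    { rewrite norm2_sq; unfold h; destruct w; unfold dot, vscal; simpl; ring. }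
    assert (Hdiff : dot w h = dot g1 h - dot g2 h)
      by (unfold w; destruct g1, g2, h; unfold dot, vsub, vadd, vopp; simpl; ring).
    apply Rabs_le_between in P1; apply Rabs_le_between in P2.
    assert (s * (norm2 w * norm2 w) <= 2 * eps * (s * norm2 w)).
    { rewrite <- Hwh, Hdiff, <- Hhs; lra. }
    apply (Rmult_le_reg_l (s * norm2 w)); nra. }
  assert (Hw : norm2 w = 0).
  { destruct (Rle_lt_or_eq_dec 0 (norm2 w) (norm2_ge0 w)) as [Hw|Hw]; [|auto].
    specialize (Hsmall (norm2 w / 4) ltac:(lra) Hw); lra. }
  apply norm2_eq0 in Hw; unfold w, vzero in Hw.
  destruct g1, g2; unfold vsub, vadd, vopp in Hw; simpl in Hw; injection Hw; intros.
  f_equal; lra.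
Qed.

Lemma is_grad_vopp V x g : (forall y, V (vopp y) = V y) ->
  is_grad V x g -> is_grad V (vopp x) (vopp g).
Proof.
  intros Veven Hg eps Heps; destruct (Hg eps Heps) as [d [Hd P]].
  exists d; split; [exact Hd|]; intros h Hh.
  rewrite <- norm2_vopp in Hh |- *; specialize (P _ Hh).
  rewrite <- (Veven (vadd (vopp x) h)), <- (Veven (vopp x)).
  replace (vopp (vadd (vopp x) h)) with (vadd x (vopp h))
    by (destruct x, h; unfold vopp, vadd; simpl; f_equal; ring).
  replace (vopp (vopp x)) with x by (destruct x; unfold vopp; simpl; f_equal; ring).
  replace (dot (vopp g) h) with (dot g (vopp h)) by (destruct g, h; unfold dot, vopp; simpl; ring).
  exact P.
Qed.

Lemma curve_deriv_vsub c1 c2 t d1 d2 : curve_deriv c1 t d1 -> curve_deriv c2 t d2 ->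
  curve_deriv (fun s => vsub (c1 s) (c2 s)) t (vsub d1 d2).
Proof.
  intros [A1 A2] [B1 B2]; split; simpl.
  - apply (derivable_pt_lim_minus (fun s => fst (c1 s)) (fun s => fst (c2 s))); auto.
  - apply (derivable_pt_lim_minus (fun s => snd (c1 s)) (fun s => snd (c2 s))); auto.
Qed.

Lemma derivable_pt_lim_dot c1 c2 t d1 d2 : curve_deriv c1 t d1 -> curve_deriv c2 t d2 ->
  derivable_pt_lim (fun s => dot (c1 s) (c2 s)) t (dot d1 (c2 t) + dot (c1 t) d2).
Proof.
  intros [A1 A2] [B1 B2]; unfold dot.
  replace (fst d1 * fst (c2 t) + snd d1 * snd (c2 t) + (fst (c1 t) * fst d2 + snd (c1 t) * snd d2))
    with ((fst d1 * fst (c2 t) + fst (c1 t) * fst d2) + (snd d1 * snd (c2 t) + snd (c1 t) * snd d2))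
    by ring.
  apply (derivable_pt_lim_plus (fun s => fst (c1 s) * fst (c2 s)) (fun s => snd (c1 s) * snd (c2 s)));
    [apply (derivable_pt_lim_mult (fun s => fst (c1 s)) (fun s => fst (c2 s)))
    |apply (derivable_pt_lim_mult (fun s => snd (c1 s)) (fun s => snd (c2 s)))]; assumption.
Qed.

Lemma curve_deriv_const g t : curve_deriv (fun _ => g) t vzero.
Proof. split; apply derivable_pt_lim_const. Qed.

Lemma Rabs_le_of_diff_quot q h d : h <> 0 -> Rabs (q / h - d) < 1 ->
  Rabs q <= (Rabs d + 1) * Rabs h.
Proof.
  intros Hh Hq.
  replace q with (q / h * h) at 1 by (field; exact Hh).
  rewrite Rabs_mult; apply Rmult_le_compat_r; [apply Rabs_pos|].
  pose proof (Rabs_triang (q / h - d) d); replace (q / h - d + d) with (q / h) in H by ring.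
  lra.
Qed.

Lemma curve_deriv_increment_bound c t d : curve_deriv c t d ->
  exists delta, 0 < delta /\ forall h, Rabs h < delta ->
    norm2 (vsub (c (t + h)) (c t)) <= (Rabs (fst d) + Rabs (snd d) + 2) * Rabs h.
Proof.
  intros [D1 D2].
  destruct (D1 1 Rlt_0_1) as [d1 P1]; destruct (D2 1 Rlt_0_1) as [d2 P2].
  exists (Rmin d1 d2); split; [apply Rmin_pos; apply cond_pos|]; intros h Hh.
  destruct (Req_dec h 0) as [->|Hh0].
  - rewrite Rplus_0_r, norm2_vsubxx, Rabs_R0; lra.
  - pose proof (Rmin_l d1 d2); pose proof (Rmin_r d1 d2).
    pose proof (Rabs_le_of_diff_quot _ _ _ Hh0 (P1 h Hh0 ltac:(lra))).
    pose proof (Rabs_le_of_diff_quot _ _ _ Hh0 (P2 h Hh0 ltac:(lra))).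
    pose proof (norm2_le_Rabs_sum (vsub (c (t + h)) (c t))); simpl in *; unfold Rminus in *; lra.
Qed.

Lemma derivable_pt_lim_0_of_small_increment f t :
  (forall eps, 0 < eps -> exists delta, 0 < delta /\
     forall h, h <> 0 -> Rabs h < delta -> Rabs (f (t + h) - f t) <= eps * Rabs h) ->
  derivable_pt_lim f t 0.
Proof.
  intros H eps Heps; destruct (H (eps / 2) ltac:(lra)) as [d [Hd P]].
  exists (mkposreal d Hd); intros h Hh0 Hh; simpl in Hh.
  specialize (P h Hh0 Hh); pose proof (Rabs_pos_lt h Hh0).
  rewrite Rminus_0_r, Rabs_div by exact Hh0.
  apply (Rmult_lt_reg_r (Rabs h)); [lra|]; unfold Rdiv.
  rewrite Rmult_assoc, Rinv_l by lra; nra.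
Qed.

Lemma derivable_pt_lim_grad_comp V c t d g : curve_deriv c t d -> is_grad V (c t) g ->
  derivable_pt_lim (fun s => V (c s)) t (dot g d).
Proof.
  intros Hc Hg; set (K := Rabs (fst d) + Rabs (snd d) + 2).
  assert (HK : 0 < K) by (unfold K; pose proof (Rabs_pos (fst d)); pose proof (Rabs_pos (snd d)); lra).
  assert (Herr : derivable_pt_lim (fun s => V (c s) - dot g (c s)) t 0).
  { apply derivable_pt_lim_0_of_small_increment; intros eps Heps.
    destruct (Hg (eps / K) ltac:(apply Rdiv_lt_0_compat; lra)) as [dV [HdV PV]].
    destruct (curve_deriv_increment_bound c t d Hc) as [dc [Hdc Pc]].
    exists (Rmin dc (dV / K)); split; [apply Rmin_pos; [|apply Rdiv_lt_0_compat]; lra|].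
    intros h _ Hh; pose proof (Rmin_l dc (dV / K)); pose proof (Rmin_r dc (dV / K)).
    specialize (Pc h ltac:(lra)); fold K in Pc.
    assert (HdV' : K * Rabs h < dV).
    { apply (Rmult_lt_reg_r (/ K)); [apply Rinv_0_lt_compat; lra|].
      replace (K * Rabs h * / K) with (Rabs h) by (field; lra); unfold Rdiv in *; lra. }
    specialize (PV (vsub (c (t + h)) (c t)) ltac:(lra)); rewrite vsubK in PV.
    replace (V (c (t + h)) - dot g (c (t + h)) - (V (c t) - dot g (c t)))
      with (V (c (t + h)) - V (c t) - dot g (vsub (c (t + h)) (c t)))
      by (destruct g, (c (t + h)), (c t); unfold dot, vsub, vadd, vopp; simpl; ring).
    apply (Rle_trans _ _ _ PV).
    replace (eps * Rabs h) with (eps / K * (K * Rabs h)) by (field; lra).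
    apply Rmult_le_compat_l; [apply Rlt_le, Rdiv_lt_0_compat|]; lra. }
  assert (Hlin := derivable_pt_lim_dot _ _ t _ _ (curve_deriv_const g t) Hc).
  apply (derivable_pt_lim_ext (fun s => (V (c s) - dot g (c s)) + dot g (c s))); [intro; ring|].
  replace (dot g d) with (0 + (dot vzero (c t) + dot g d))
    by (unfold dot, vzero; simpl; ring).
  exact (derivable_pt_lim_plus _ _ t _ _ Herr Hlin).
Qed.

(** * The energy *)

Lemma V_I_vopp a_I r_d x : V_I a_I r_d (vopp x) = V_I a_I r_d x.
Proof. unfold V_I; rewrite norm2_vopp; reflexivity. Qed.

Lemma Phi_sumL Om a_I a_h r_d N p v s :
  Phi Om a_I a_h r_d N p v s =
  / 2 * sumL (seq 0 N) (fun i =>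
     dot (v i s) (v i s)
     + sumL (seq 0 N) (fun j =>
         if Nat.eq_dec j i then 0 else V_I a_I r_d (vsub (p i s) (p j s)))
     + 2 * V_h Om a_h r_d (p i s)).
Proof. reflexivity. Qed.

(* The pair terms are kept in the form [G j . (x + w j)], whose sum over [i] cancels
   by antisymmetry of the pairwise gradients. *)
Lemma energy_rate_term N i a (x h : pt) (G w : nat -> pt) :
  let u := vsub (vsub (vopp (sumV_ne N i G)) h) (vscal a x) in
  dot u x + dot x u
  + sumL (seq 0 N) (fun j => if Nat.eq_dec j i then 0 else dot (G j) (vsub x (w j)))
  + 2 * dot h x
  = -2 * a * dot x x
    - sumL (seq 0 N) (fun j => if Nat.eq_dec j i then 0 else dot (G j) (vadd x (w j))).
Proof.
  intro u.
  assert (Hu : dot x u = - dot x (sumV_ne N i G) - dot x h - a * dot x x)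
    by (unfold u; destruct x, h, (sumV_ne N i G); unfold dot, vsub, vadd, vopp, vscal; simpl; ring).
  rewrite (dot_comm u x), Hu, dot_sumV_ne, (dot_comm h x).
  assert (Hpair :
    sumL (seq 0 N) (fun j => if Nat.eq_dec j i then 0 else dot (G j) (vsub x (w j)))
    + sumL (seq 0 N) (fun j => if Nat.eq_dec j i then 0 else dot (G j) (vadd x (w j)))
    = 2 * sumR_ne N i (fun j => dot x (G j))).
  { rewrite <- sumL_plus; unfold sumR_ne; fold (sumL (seq 0 N) (fun j =>
      if Nat.eq_dec j i then 0 else dot x (G j))); rewrite <- sumL_scal.
    apply sumL_ext; intros j _; destruct Nat.eq_dec; [ring|].
    destruct x, (G j), (w j); unfold dot, vsub, vadd, vopp; simpl; ring. }
  lra.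
Qed.

Section EnergyDerivative.

Variables (Om : pt -> Prop) (r_d a_I a_h a_v : R) (N : nat) (p v : nat -> R -> pt) (t : R).
Variables (GI : nat -> nat -> pt) (GH : nat -> pt).

Hypothesis p_deriv : forall i, (i < N)%nat -> curve_deriv (p i) t (v i t).
Hypothesis GI_grad : forall i j, (i < N)%nat -> (j < N)%nat -> j <> i ->
  is_grad (V_I a_I r_d) (vsub (p i t) (p j t)) (GI i j).
Hypothesis GH_grad : forall i, (i < N)%nat -> is_grad (V_h Om a_h r_d) (p i t) (GH i).
Hypothesis v_deriv : forall i, (i < N)%nat ->
  curve_deriv (v i) t (vsub (vsub (vopp (sumV_ne N i (GI i))) (GH i)) (vscal a_v (v i t))).

Lemma GI_antisym i j : (i < N)%nat -> (j < N)%nat -> i <> j -> GI j i = vopp (GI i j).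
Proof.
  intros Hi Hj Hij.
  pose proof (is_grad_vopp _ _ _ (V_I_vopp a_I r_d) (GI_grad i j Hi Hj (not_eq_sym Hij))) as H.
  replace (vopp (vsub (p i t) (p j t))) with (vsub (p j t) (p i t)) in H
    by (destruct (p i t), (p j t); unfold vopp, vsub, vadd; simpl; f_equal; ring).
  exact (is_grad_unique _ _ _ _ (GI_grad j i Hj Hi Hij) H).
Qed.

Let u i := vsub (vsub (vopp (sumV_ne N i (GI i))) (GH i)) (vscal a_v (v i t)).

Lemma Phi_derivable_pt_lim_chain_rule :
  derivable_pt_lim (Phi Om a_I a_h r_d N p v) t
    (/ 2 * sumL (seq 0 N) (fun i =>
       (dot (u i) (v i t) + dot (v i t) (u i))
       + sumL (seq 0 N) (fun j =>
           if Nat.eq_dec j i then 0 else dot (GI i j) (vsub (v i t) (v j t)))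
       + 2 * dot (GH i) (v i t))).
Proof.
  apply (derivable_pt_lim_ext (fun s => / 2 * sumL (seq 0 N) (fun i =>
     dot (v i s) (v i s)
     + sumL (seq 0 N) (fun j =>
         if Nat.eq_dec j i then 0 else V_I a_I r_d (vsub (p i s) (p j s)))
     + 2 * V_h Om a_h r_d (p i s)))); [intro s; symmetry; apply Phi_sumL|].
  apply (derivable_pt_lim_scal (fun s => sumL (seq 0 N) _)).
  apply (derivable_pt_lim_sumL _ (fun i s => _)); intros i Hil.
  assert (Hi : (i < N)%nat) by (apply in_seq in Hil; lia).
  apply (derivable_pt_lim_plus (fun s => _ + _) (fun s => 2 * _)).
  apply (derivable_pt_lim_plus (fun s => dot _ _) (fun s => sumL _ _)).
  - exact (derivable_pt_lim_dot _ _ t _ _ (v_deriv i Hi) (v_deriv i Hi)).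
  - apply (derivable_pt_lim_sumL _ (fun j s => _)); intros j Hjl.
    assert (Hj : (j < N)%nat) by (apply in_seq in Hjl; lia).
    destruct Nat.eq_dec as [_|Hji]; [apply derivable_pt_lim_const|].
    apply (derivable_pt_lim_grad_comp _ (fun s => vsub (p i s) (p j s))).
    + exact (curve_deriv_vsub _ _ t _ _ (p_deriv i Hi) (p_deriv j Hj)).
    + exact (GI_grad i j Hi Hj Hji).
  - apply (derivable_pt_lim_scal (fun s => V_h Om a_h r_d (p i s))).
    exact (derivable_pt_lim_grad_comp _ _ t _ _ (p_deriv i Hi) (GH_grad i Hi)).
Qed.

Lemma Phi_derivable_pt_lim_of_gradients :
  derivable_pt_lim (Phi Om a_I a_h r_d N p v) t
    (- a_v * sumR N (fun i => dot (v i t) (v i t))).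
Proof.
  pose proof Phi_derivable_pt_lim_chain_rule as H.
  set (A := fun i j => if Nat.eq_dec j i then 0 else dot (GI i j) (vadd (v i t) (v j t))).
  assert (Hcancel : sumL (seq 0 N) (fun i => sumL (seq 0 N) (A i)) = 0).
  { apply sumL_antisym; intros i j Hi Hj; apply in_seq in Hi, Hj; unfold A.
    destruct (Nat.eq_dec i j) as [->|Hij]; [destruct Nat.eq_dec; [ring | congruence]|].
    destruct (Nat.eq_dec j i) as [->|_]; [congruence|].
    rewrite (GI_antisym i j) by lia.
    destruct (GI i j), (v i t), (v j t); unfold dot, vadd, vopp; simpl; ring. }
  rewrite (sumL_ext _ _ (fun i => -2 * a_v * dot (v i t) (v i t) - sumL (seq 0 N) (A i)))
    in H by (intros i _; apply energy_rate_term).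
  rewrite sumL_minus, Hcancel, sumL_scal in H.
  replace (- a_v * sumR N (fun i => dot (v i t) (v i t)))
    with (/ 2 * (-2 * a_v * sumL (seq 0 N) (fun i => dot (v i t) (v i t)) - 0))
    by (unfold sumR, sumL; field).
  exact H.
Qed.

End EnergyDerivative.

Definition controlled_dynamics_at (Om : pt -> Prop) (r_d a_I a_h a_v : R) (N : nat)
    (p v : nat -> R -> pt) (t : R) (i : nat) : Prop :=
  curve_deriv (p i) t (v i t) /\
  exists (gI : nat -> pt) (gh : pt),
    (forall j, (j < N)%nat -> j <> i ->
       is_grad (V_I a_I r_d) (vsub (p i t) (p j t)) (gI j)) /\
    is_grad (V_h Om a_h r_d) (p i t) gh /\
    curve_deriv (v i) t (vsub (vsub (vopp (sumV_ne N i gI)) gh) (vscal a_v (v i t))).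

Lemma Phi_derivable_pt_lim Om r_d a_I a_h a_v N p v t :
  (forall i, (i < N)%nat -> controlled_dynamics_at Om r_d a_I a_h a_v N p v t i) ->
  derivable_pt_lim (Phi Om a_I a_h r_d N p v) t
    (- a_v * sumR N (fun i => dot (v i t) (v i t))).
Proof.
  intro Hdyn.
  assert (Hgrad : forall i, exists g : (nat -> pt) * pt, (i < N)%nat ->
    (forall j, (j < N)%nat -> j <> i ->
       is_grad (V_I a_I r_d) (vsub (p i t) (p j t)) (fst g j)) /\
    is_grad (V_h Om a_h r_d) (p i t) (snd g) /\
    curve_deriv (v i) t (vsub (vsub (vopp (sumV_ne N i (fst g))) (snd g)) (vscal a_v (v i t)))).
  { intro i; destruct (Compare_dec.lt_dec i N) as [Hi|Hi].
    - destruct (Hdyn i Hi) as [_ [gI [gh H]]]; exists (gI, gh); intros _; exact H.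
    - exists (fun _ => vzero, vzero); intro; contradiction. }
  apply functional_choice in Hgrad as [g Hg].
  apply (Phi_derivable_pt_lim_of_gradients Om r_d a_I a_h a_v N p v t
           (fun i => fst (g i)) (fun i => snd (g i))).
  - intros i Hi; apply Hdyn, Hi.
  - intros i j Hi Hj Hji; apply (Hg i Hi); assumption.
  - intros i Hi; apply (Hg i Hi).
  - intros i Hi; apply (Hg i Hi).
Qed.

Lemma Phi_continuity_pt_right_0 Om r_d a_I a_h N p v :
  (forall i, (i < N)%nat -> cont_nonneg (p i) /\ cont_nonneg (v i)) ->
  continuity_pt (fun s => Phi Om a_I a_h r_d N p v (Rmax 0 s)) 0.
Proof.
  intros Hc.
  apply (continuity_pt_ext (fun s => / 2 * sumL (seq 0 N) (fun i =>
     dot (v i (Rmax 0 s)) (v i (Rmax 0 s))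
     + sumL (seq 0 N) (fun j => if Nat.eq_dec j i then 0
         else V_I a_I r_d (vsub (p i (Rmax 0 s)) (p j (Rmax 0 s))))
     + 2 * V_h Om a_h r_d (p i (Rmax 0 s))))); [intro s; symmetry; apply Phi_sumL|].
  apply (continuity_pt_mult (fun _ => / 2)); [apply continuity_pt_const; intros ? ?; reflexivity|].
  apply (continuity_pt_sumL _ (fun i s => _)); intros i Hil.
  assert (Hi : (i < N)%nat) by (apply in_seq in Hil; lia).
  destruct (Hc i Hi) as [Cp Cv].
  apply (continuity_pt_plus (fun s => _ + _) (fun s => 2 * _)).
  apply (continuity_pt_plus (fun s => dot _ _) (fun s => sumL _ _)).
  - exact (continuity_pt_right_0 (v i) (fun y => dot y y) Cv (cont_at_dot_self _)).
  - apply (continuity_pt_sumL _ (fun j s => _)); intros j Hjl.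
    assert (Hj : (j < N)%nat) by (apply in_seq in Hjl; lia).
    destruct Nat.eq_dec; [apply continuity_pt_const; intros ? ?; reflexivity|].
    apply (continuity_pt_right_0 (fun s => vsub (p i s) (p j s)) (V_I a_I r_d)).
    + exact (cont_nonneg_vsub _ _ Cp (proj1 (Hc j Hj))).
    + apply cont_at_V_I.
  - apply (continuity_pt_scal (fun s => V_h Om a_h r_d (p i (Rmax 0 s)))).
    exact (continuity_pt_right_0 (p i) (V_h Om a_h r_d) Cp (cont_at_V_h _ _ _ _)).
Qed.

(** * No collision *)

Lemma V_I_ge0 a_I r_d x : 0 < a_I -> 0 <= V_I a_I r_d x.
Proof.
  intro Ha; unfold V_I; destruct Rlt_dec; [|lra].
  pose proof (pow2_ge_0 (norm2 x - r_d)); apply Rmult_le_pos; lra.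
Qed.

Lemma V_h_ge0 Om a_h r_d x : 0 < a_h -> 0 <= V_h Om a_h r_d x.
Proof.
  intro Ha; unfold V_h; destruct Rle_dec; [lra|].
  pose proof (pow2_ge_0 (signed_dist Om x + r_d / 2)); apply Rmult_le_pos; lra.
Qed.

Lemma V_I_ge_of_norm2_le a_I r_d c x : 0 < a_I -> 0 <= c <= r_d -> norm2 x <= c ->
  a_I / 2 * (c - r_d) ^ 2 <= V_I a_I r_d x.
Proof.
  intros Ha Hc Hx; pose proof (norm2_ge0 x); unfold V_I.
  destruct Rlt_dec.
  - apply Rmult_le_compat_l; [lra|]; nra.
  - replace c with r_d by lra; replace (r_d - r_d) with 0 by ring; lra.
Qed.

(* Each pair appears twice in [Phi], once from each vehicle, which compensates the
   factor [1/2]. *)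
Lemma V_I_le_Phi Om r_d a_I a_h N p v t i j : 0 < a_I -> 0 < a_h ->
  (i < N)%nat -> (j < N)%nat -> i <> j ->
  V_I a_I r_d (vsub (p i t) (p j t)) <= Phi Om a_I a_h r_d N p v t.
Proof.
  intros HaI Hah Hi Hj Hij; rewrite Phi_sumL.
  set (F := fun k => dot (v k t) (v k t)
     + sumL (seq 0 N) (fun m => if Nat.eq_dec m k then 0 else V_I a_I r_d (vsub (p k t) (p m t)))
     + 2 * V_h Om a_h r_d (p k t)).
  assert (Hpair : forall k m, (m < N)%nat -> m <> k ->
            V_I a_I r_d (vsub (p k t) (p m t)) <= F k).
  { intros k m Hm Hmk; unfold F.
    pose proof (dot_ge0 (v k t)); pose proof (V_h_ge0 Om a_h r_d (p k t) Hah).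
    assert (Hin : In m (seq 0 N)) by (apply in_seq; lia).
    assert (Hsum := sumL_ge_term (seq 0 N)
      (fun m' => if Nat.eq_dec m' k then 0 else V_I a_I r_d (vsub (p k t) (p m' t))) m
      ltac:(intros m' _; cbv beta; destruct Nat.eq_dec; [lra | apply V_I_ge0, HaI]) Hin).
    cbv beta in Hsum; destruct (Nat.eq_dec m k); [congruence | lra]. }
  assert (HF : forall k, In k (seq 0 N) -> 0 <= F k).
  { intros k _; unfold F.
    pose proof (dot_ge0 (v k t)); pose proof (V_h_ge0 Om a_h r_d (p k t) Hah).
    assert (0 <= sumL (seq 0 N) (fun m => if Nat.eq_dec m k then 0
                                   else V_I a_I r_d (vsub (p k t) (p m t)))).
    { apply sumL_ge0; intros m _; cbv beta; destruct Nat.eq_dec; [lra | apply V_I_ge0, HaI]. }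
    lra. }
  assert (Hin : forall k, (k < N)%nat -> In k (seq 0 N)) by (intros; apply in_seq; lia).
  pose proof (sumL_ge_two_terms (seq 0 N) F i j (seq_NoDup N 0) HF (Hin i Hi) (Hin j Hj) Hij).
  pose proof (Hpair i j Hj (not_eq_sym Hij)); pose proof (Hpair j i Hi Hij).
  replace (vsub (p j t) (p i t)) with (vopp (vsub (p i t) (p j t))) in H1
    by (destruct (p i t), (p j t); unfold vopp, vsub, vadd; simpl; f_equal; ring).
  rewrite V_I_vopp in H1; fold F; lra.
Qed.

Lemma le_of_derivative_nonpos (f f' : R -> R) s t :
  (forall x, 0 < x -> derivable_pt_lim f x (f' x)) -> (forall x, 0 < x -> f' x <= 0) ->
  0 < s <= t -> f t <= f s.
Proof.
  intros Hd Hneg [Hs Hst].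
  destruct (Req_dec s t) as [->|Hne]; [lra|].
  destruct (MVT_cor2 f f' s t) as [c [Hc1 Hc2]]; [lra | intros c Hc; apply Hd; lra |].
  pose proof (Hneg c ltac:(lra)); nra.
Qed.

Lemma le_at_0_of_continuity_pt_right (f : R -> R) t :
  continuity_pt (fun s => f (Rmax 0 s)) 0 -> 0 < t ->
  (forall s, 0 < s < t -> f t <= f s) -> f t <= f 0.
Proof.
  intros Hc Ht Hle; apply Rnot_lt_le; intro Hlt.
  destruct (Hc (f t - f 0) ltac:(lra)) as [a [Ha P]].
  pose proof (Rmin_l (a / 2) (t / 2)); pose proof (Rmin_r (a / 2) (t / 2)).
  set (s := Rmin (a / 2) (t / 2)) in *.
  assert (Hs : 0 < s) by (apply Rmin_pos; lra).
  specialize (P s); simpl in P; unfold R_dist in P.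
  rewrite (Rmax_right 0 s), (Rmax_left 0 0) in P by lra.
  assert (Hclose : Rabs (f s - f 0) < f t - f 0).
  { apply P; split; [split; [exact I | apply Rlt_not_eq; exact Hs]|].
    rewrite Rminus_0_r, Rabs_right; lra. }
  pose proof (Hle s ltac:(lra)); apply Rabs_def2 in Hclose; lra.
Qed.

Theorem proposition3
  (Om : pt -> Prop) (r_d a_I a_h a_v c_r : R) (N : nat)
  (p v : nat -> R -> pt) :
  compact_domain Om ->
  0 < r_d -> 0 < a_I -> 0 < a_h -> 0 < a_v -> 0 < c_r ->
  c_r <= r_d ->
  (* trajectories are continuous on [0, +oo) *)
  (forall i, (i < N)%nat -> cont_nonneg (p i) /\ cont_nonneg (v i)) ->
  (* dynamics dp_i = v_i, dv_i = u_i with the (unthresholded) control law *)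
  (forall i t, (i < N)%nat -> 0 < t ->
     curve_deriv (p i) t (v i t) /\
     exists (gI : nat -> pt) (gh : pt),
       (forall j, (j < N)%nat -> j <> i ->
          is_grad (V_I a_I r_d) (vsub (p i t) (p j t)) (gI j)) /\
       is_grad (V_h Om a_h r_d) (p i t) gh /\
       curve_deriv (v i) t
         (vsub (vsub (vopp (sumV_ne N i gI)) gh) (vscal a_v (v i t)))) ->
  Phi Om a_I a_h r_d N p v 0 < a_I / 2 * (c_r - r_d) ^ 2 ->
  forall i j t, (i < N)%nat -> (j < N)%nat -> i <> j -> 0 <= t ->
    c_r < norm2 (vsub (p i t) (p j t)).
Proof.
  intros _ _ HaI Hah Hav Hcr Hcrd Hcont Hdyn H0 i j t Hi Hj Hij Ht.
  set (Ph := Phi Om a_I a_h r_d N p v) in H0.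
  assert (Hdecr : Ph t <= Ph 0).
  { destruct Ht as [Ht|<-]; [|lra].
    apply (le_at_0_of_continuity_pt_right Ph t (Phi_continuity_pt_right_0 _ _ _ _ _ _ _ Hcont) Ht).
    intros s Hs.
    apply (le_of_derivative_nonpos Ph (fun x => - a_v * sumR N (fun k => dot (v k x) (v k x))));
      [| | lra].
    - intros x Hx; apply Phi_derivable_pt_lim; intros k Hk; exact (Hdyn k x Hk Hx).
    - intros x _; assert (Hkin := sumL_ge0 (seq 0 N) (fun k => dot (v k x) (v k x))
                                      (fun k _ => dot_ge0 (v k x))).
      change (sumL (seq 0 N) (fun k => dot (v k x) (v k x)))
        with (sumR N (fun k => dot (v k x) (v k x))) in Hkin; nra. }
  apply Rnot_le_lt; intro Hcol.
  assert (Hlow := V_I_ge_of_norm2_le a_I r_d c_r _ HaI ltac:(lra) Hcol).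
  assert (Hup := V_I_le_Phi Om r_d a_I a_h N p v t i j HaI Hah Hi Hj Hij).
  fold Ph in Hup; lra.
Qed.
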